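(* Let $\mathcal{G}=(V,L)$ be a finite connected undirected graph with monitor set $M$ and non-monitor set $N=V\setminus M$, with measurement paths given by Controllable Arbitrary-path Probing (CAP). Let $S\subseteq N$ and $k\ge1$. Then $S$ is $k$-identifiable if and only if for every set $V'\subseteq N$ with $|V'|\le k-1$, each connected component of $\mathcal{G}-V'$ that contains a node of $S$ contains a monitor.
   Context: $\mathcal{G}-V'$ denotes the graph obtained by deleting the nodes of $V'$ and their incident links. Under CAP, the measurement paths $P$ are all walks in $\mathcal{G}$ (paths or cycles, repeated nodes/links allowed) starting and ending at monitors (possibly the same). A failure set is any $F\subseteq N$; a path fails iff it traverses a node of $F$. $P_F$ is the set of paths in $P$ traversing a node of $F$; $F_1,F_2$ distinguishable iff $P_{F_1}\ne P_{F_2}$. $S\subseteq N$ is $k$-identifiable if any two failure sets $F_1,F_2$ with $|F_1|,|F_2|\le k$ and $F_1\cap S\ne F_2\cap S$ are distinguishable. *)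

From mathcomp Require Import all_boot.
Set Implicit Arguments. Unset Strict Implicit. Unset Printing Implicit Defensive.

(* A finite undirected simple graph: node type T (finite), adjacency e
   (symmetric, irreflexive).  Monitors: M; non-monitors N = ~: M. *)

Section CAP.
Variables (T : finType) (e : rel T) (M : {set T}).

(* Under CAP, the measurement paths are all walks (repeated nodes allowed)
   starting and ending at monitors: a nonempty node sequence x :: p with
   consecutive nodes adjacent, x a monitor and the last node a monitor. *)
Definition meas_path (w : seq T) : bool :=
  if w is x :: p then [&& x \in M, path e x p & last x p \in M] else false.

Definition P_F (F : {set T}) : pred (seq T) :=
  fun w => meas_path w && has (fun v => v \in F) w.

Definition distinguishable (F1 F2 : {set T}) : Prop :=
  exists w : seq T, P_F F1 w != P_F F2 w.

Definition k_identifiable (k : nat) (S : {set T}) : Prop :=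
  forall F1 F2 : {set T},
    F1 \subset ~: M -> F2 \subset ~: M ->
    #|F1| <= k -> #|F2| <= k ->
    F1 :&: S != F2 :&: S -> distinguishable F1 F2.

Definition del_rel (V' : {set T}) : rel T :=
  fun x y => [&& e x y, x \notin V' & y \notin V'].

End CAP.

From mathcomp Require Import all_boot.

Set Implicit Arguments.
Unset Strict Implicit.
Unset Printing Implicit Defensive.

(* If S is k-identifiable and s in S \ V' with |V'| <= k - 1, some walk
   distinguishes s |: V' from V'; it meets s, avoids V' and starts at a
   monitor, so s reaches a monitor in G - V'.  Conversely, if s lies in F1 but
   not in F2, a monitor path from s in G - (F1 :&: F2) leaves F1 :|: F2 for the
   last time at some node z, lying in exactly one of F1, F2; going from the
   monitor to z and back along this tail gives a measurement path meeting one
   failure set and not the other. *)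

Lemma closed_walk (T : finType) (r : rel T) : symmetric r ->
  forall x y, connect r x y -> exists q, [/\ path r x q, last x q = x & y \in x :: q].
Proof.
move=> r_sym x y /connectP [p xp ->].
exists (p ++ rev (belast x p)); split.
- rewrite cat_path xp rev_path /=.
  by apply: sub_path xp => a b; rewrite r_sym.
- have := congr1 (fun s => last x (rev s)) (lastI x p).
  by rewrite rev_rcons rev_cons last_rcons last_cat /= => <-.
- by rewrite -cat_cons mem_cat mem_last.
Qed.

Section DeletedGraph.
Variables (T : finType) (e : rel T).

Lemma del_rel_sym (A : {set T}) : symmetric e -> symmetric (del_rel e A).
Proof.
by move=> e_sym x y; rewrite /del_rel e_sym; case: (x \in A); case: (y \in A); rewrite ?andbF.
Qed.

Lemma path_del_rel (A : {set T}) x p : x \notin A ->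
  path (del_rel e A) x p = path e x p && all (fun v => v \notin A) p.
Proof.
elim: p x => [|y p IH] x xA //=.
rewrite /del_rel xA /=; case: (boolP (y \in A)) => [|yA] /=; first by rewrite !andbF.
by rewrite IH // andbACA.
Qed.

Lemma connect_del_relS (A B : {set T}) x y : B \subset A ->
  connect (del_rel e A) x y -> connect (del_rel e B) x y.
Proof.
move=> BA; apply: connect_sub => a b /and3P [eab aA bA]; apply: connect1.
by rewrite /del_rel eab !(contra (subsetP BA _)).
Qed.

(* z is the last node of the path lying in C. *)
Lemma connect_del_rel_exit (A C : {set T}) x y :
  connect (del_rel e A) x y -> x \in C -> y \notin C ->
  exists2 z, z \in C :\: A & connect (del_rel e (C :\ z)) z y.
Proof.
case/connectP=> p + -> {y}; elim/last_ind: p => [|p y IH] /=; first by move=> _ ->.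
rewrite rcons_path last_rcons => /andP [xp /and3P [ey zA yA]] xC yC.
have step z : last x p \notin C :\ z -> connect (del_rel e (C :\ z)) (last x p) y.
  by move=> lz; apply: connect1; rewrite /del_rel ey lz !inE (negbTE yC) andbF.
case: (boolP (last x p \in C)) => [lC | lC].
  by exists (last x p); [rewrite inE lC zA | apply: step; rewrite !inE eqxx].
have [z zCA zl] := IH xp xC lC.
by exists z => //; apply: connect_trans zl (step z _); rewrite inE (negbTE lC) andbF.
Qed.

End DeletedGraph.

Section Identifiability.
Variables (T : finType) (e : rel T) (M : {set T}).
Hypothesis e_sym : symmetric e.

Lemma distinguishable_sym (F1 F2 : {set T}) :
  distinguishable e M F1 F2 -> distinguishable e M F2 F1.
Proof. by case=> w neq; exists w; rewrite eq_sym. Qed.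

Lemma distinguishable_of_connect_avoid (F1 F2 : {set T}) z m :
  z \in F1 -> m \in M -> m \notin F2 -> connect (del_rel e F2) z m ->
  distinguishable e M F1 F2.
Proof.
move=> zF1 mM mF2; rewrite (sym_connect_sym (del_rel_sym F2 e_sym)).
case/(closed_walk (del_rel_sym F2 e_sym))=> q [+ qm zq].
rewrite path_del_rel // => /andP [mq qF2].
exists (m :: q); rewrite /P_F /meas_path mM mq qm mM.
have -> : has (fun v => v \in F1) (m :: q) by apply/hasP; exists z.
suff -> : has (fun v => v \in F2) (m :: q) = false by [].
by rewrite /= (negbTE mF2); apply/negbTE; rewrite -all_predC.
Qed.

Lemma connect_monitor_of_distinguishable (V' : {set T}) s :
  distinguishable e M (s |: V') V' -> exists2 m, m \in M & connect (del_rel e V') s m.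
Proof.
case=> [[|x p]]; rewrite /P_F //.
case: (boolP (meas_path e M (x :: p))) => [/and3P [xM xp _] | _]; last by rewrite eqxx.
rewrite !andTb.
have [hitV | /hasPn avoidV] := boolP (has (fun v => v \in V') (x :: p)).
  by rewrite (sub_has _ hitV) // => v vV; rewrite in_setU1 vV orbT.
rewrite eqbF_neg negbK => /hasP [v vw]; rewrite in_setU1 => /orP [/eqP vs | vV]; last first.
  by have := avoidV v vw; rewrite vV.
have xp' : path (del_rel e V') x p.
  rewrite path_del_rel ?xp ?(avoidV x (mem_head x p)) //=.
  by apply/allP=> y yp; apply: avoidV; rewrite inE yp orbT.
exists x => //; rewrite (sym_connect_sym (del_rel_sym V' e_sym)) -vs.
exact: path_connect xp' v vw.
Qed.

Lemma distinguishable_of_connect_monitor (F1 F2 : {set T}) s :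
  F1 :|: F2 \subset ~: M -> s \in F1 :|: F2 ->
  (exists2 m, m \in M & connect (del_rel e (F1 :&: F2)) s m) ->
  distinguishable e M F1 F2.
Proof.
move=> FN sF [m mM sm].
have mF : m \notin F1 :|: F2 by apply: contraL mM => /(subsetP FN); rewrite inE.
have [z] := connect_del_rel_exit sm sF mF.
rewrite in_setD in_setI negb_and in_setU => /andP [zI zU] zm.
move: mF; rewrite in_setU negb_or => /andP [mF1 mF2].
have [zF1 | zF1] := boolP (z \in F1).
  rewrite zF1 /= in zI.
  apply: distinguishable_of_connect_avoid zF1 mM mF2 (connect_del_relS _ zm).
  by rewrite subsetD1 subsetUr.
apply: distinguishable_sym; rewrite (negbTE zF1) /= in zU.
apply: distinguishable_of_connect_avoid zU mM mF1 (connect_del_relS _ zm).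
by rewrite subsetD1 subsetUl.
Qed.

End Identifiability.

Theorem lemma3 (T : finType) (e : rel T) (M : {set T})
  (e_sym : symmetric e) (e_irr : irreflexive e)
  (conn : forall x y : T, connect e x y)
  (S : {set T}) (k : nat)
  (HS : S \subset ~: M) (Hk : 1 <= k) :
  k_identifiable e M k S <->
  (forall V' : {set T}, V' \subset ~: M -> #|V'| <= k.-1 ->
     forall s : T, s \in S -> s \notin V' ->
       exists2 m : T, m \in M & connect (del_rel e V') s m).
Proof.
split=> [Hid V' V'N cV' s sS sV' | Hcut F1 F2 F1N F2N cF1 cF2 neqS].
  apply: (connect_monitor_of_distinguishable e_sym); apply: Hid => //.
  - by rewrite subUset sub1set (subsetP HS).
  - by rewrite cardsU1 sV' add1n; case: k Hk cV'.
  - exact: leq_trans cV' (leq_pred k).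
  - by apply/eqP=> /setP /(_ s); rewrite !inE sS eqxx (negbTE sV').
have separated (G1 G2 : {set T}) s : G1 \subset ~: M -> G2 \subset ~: M -> #|G1| <= k ->
    s \in S -> s \in G1 -> s \notin G2 -> distinguishable e M G1 G2.
  move=> G1N G2N cG1 sS sG1 sG2.
  apply: (distinguishable_of_connect_monitor e_sym (s := s)).
  - by rewrite subUset G1N.
  - by rewrite inE sG1.
  apply: Hcut => //; last by rewrite inE (negbTE sG2) andbF.
  - exact: subset_trans (subsetIl _ _) G1N.
  - have sub : G1 :&: G2 \subset G1 :\ s by rewrite subsetD1 subsetIl inE (negbTE sG2) andbF.
    apply: leq_trans (subset_leq_card sub) _.
    by move: cG1; rewrite (cardsD1 s) sG1 add1n; case: (k).
case: (pickP [pred s in S | (s \in F1) != (s \in F2)]) => [s /andP [sS] | noS].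
  have [sF1 | sF1] := boolP (s \in F1); rewrite ?eqbF_neg ?negbK => sF2.
  - exact: separated sS sF1 sF2.
  - exact/distinguishable_sym/(separated _ _ s).
case/eqP: neqS; apply/setP=> x; rewrite !inE.
by have := noS x; rewrite /=; case: (x \in S); case: (x \in F1); case: (x \in F2).
Qed.
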